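(* Let $n\in\mathbb N$. Then there exist $k\in\mathbb N$ and a unital ${}^\ast$-homomorphism $Z_{n,n+1}\to Z_{2^k,2^k+1}$.
   Context: For natural numbers $p,q$, $Z_{p,q}=\{f\in C([0,1],M_p\otimes M_q): f(0)\in M_p\otimes1_q,\ f(1)\in1_p\otimes M_q\}$. *)

From mathcomp Require Import all_boot all_order all_algebra.
From mathcomp Require Import reals complex mxtens.
Set Implicit Arguments. Unset Strict Implicit. Unset Printing Implicit Defensive.
Import Order.TTheory GRing.Theory Num.Theory.
Local Open Scope ring_scope.

Definition unit_interval (R : realType) := {t : R | (0 <= t) && (t <= 1)}.

Definition ui0 (R : realType) : unit_interval R :=
  exist _ 0 (introT andP (conj (lexx 0) ler01)).
Definition ui1 (R : realType) : unit_interval R :=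
  exist _ 1 (introT andP (conj ler01 (lexx 1))).

(* Continuity of a map [0,1] -> M_N(C), written out entrywise (all norms on
   M_N(C) are equivalent), via the real and imaginary parts of the entries. *)
Definition cont_mx (R : realType) (N : nat)
  (f : unit_interval R -> 'M[R[i]]_N) : Prop :=
  forall (t : unit_interval R) (eps : R), 0 < eps ->
  exists2 delta : R, 0 < delta &
    forall s : unit_interval R, `|sval s - sval t| < delta ->
      forall i j : 'I_N,
        `|complex.Re (f s i j) - complex.Re (f t i j)| < eps /\
        `|complex.Im (f s i j) - complex.Im (f t i j)| < eps.

(* The dimension-drop algebra
   Z_{p,q} = { f in C([0,1], M_p (x) M_q) : f(0) in M_p (x) 1_q,
                                            f(1) in 1_p (x) M_q },
   with M_p (x) M_q identified with M_{p*q} via the Kronecker product. *)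
Definition in_Z (R : realType) (p q : nat)
  (f : unit_interval R -> 'M[R[i]]_(p * q)) : Prop :=
  cont_mx f /\
  (exists A : 'M[R[i]]_p, f (ui0 R) = A *t (1%:M : 'M[R[i]]_q)) /\
  (exists B : 'M[R[i]]_q, f (ui1 R) = (1%:M : 'M[R[i]]_p) *t B).

Definition Z_alg (R : realType) (p q : nat) :=
  {f : unit_interval R -> 'M[R[i]]_(p * q) | in_Z f}.

Definition adj_mx (R : realType) (N : nat) (A : 'M[R[i]]_N) : 'M[R[i]]_N :=
  map_mx (@conjc R) A^T.

Definition unital_star_hom (R : realType) (p q p' q' : nat)
  (phi : Z_alg R p q -> Z_alg R p' q') : Prop :=
  [/\ (forall f g : Z_alg R p q, forall h : Z_alg R p q,
         (forall t, sval h t = sval f t + sval g t) ->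
         forall t, sval (phi h) t = sval (phi f) t + sval (phi g) t),
      (forall (c : R[i]) (f h : Z_alg R p q),
         (forall t, sval h t = c *: sval f t) ->
         forall t, sval (phi h) t = c *: sval (phi f) t),
      (forall f g h : Z_alg R p q,
         (forall t, sval h t = sval f t *m sval g t) ->
         forall t, sval (phi h) t = sval (phi f) t *m sval (phi g) t),
      (forall f h : Z_alg R p q,
         (forall t, sval h t = adj_mx (sval f t)) ->
         forall t, sval (phi h) t = adj_mx (sval (phi f) t)) &
      (forall u : Z_alg R p q, (forall t, sval u t = 1%:M) ->
         forall t, sval (phi u) t = 1%:M)].

(* Write N = (a+1) p + b (p+1); this is possible as soon as N >= p^2, e.g. for
   N = 4^n and p = n.  For f in Z_{p,p+1} let f(0) = A_f (x) 1 and f(1) = 1 (x) B_f.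
   The block diagonal of a+1+b copies of f, a N copies of A_f and b (N+1) copies of
   B_f is a continuous unital *-homomorphism into M_{N(N+1)}.  At t = 0 it is a sum
   of (a+1)(N+1) copies of A_f and b (N+1) copies of B_f, hence conjugate by a
   permutation matrix to some X (x) 1_{N+1}; at t = 1 it is a sum of a N copies of
   A_f and (b+1) N copies of B_f, hence permutation-conjugate to some 1_N (x) Y.
   Conjugating by a continuous path of unitaries between the two permutation
   matrices (a product of paths E + e^{i pi t} F, one per transposition) gives a
   map into Z_{N,N+1}. *)

From mathcomp Require Import all_boot all_order all_algebra all_fingroup.
From mathcomp Require Import reals complex mxtens.
From mathcomp Require Import boolp topology normedtype trigo.
From mathcomp Require Import ring lra zify.
Set Implicit Arguments. Unset Strict Implicit. Unset Printing Implicit Defensive.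
Import Order.TTheory GRing.Theory Num.Theory.
Import numFieldNormedType.Exports.
Local Open Scope ring_scope.

(** * Tensor factors and adjoints *)

Section TensorProducts.
Variable K : comPzRingType.

Lemma tensmxDr m1 n1 m2 n2 (A : 'M[K]_(m1, n1)) (B B' : 'M[K]_(m2, n2)) :
  A *t (B + B') = A *t B + A *t B'.
Proof. by apply/matrixP => x y; rewrite !mxE mulrDr. Qed.

Lemma tensmxZr m1 n1 m2 n2 (A : 'M[K]_(m1, n1)) (c : K) (B : 'M[K]_(m2, n2)) :
  A *t (c *: B) = c *: (A *t B).
Proof. by apply/matrixP => x y; rewrite !mxE mulrCA. Qed.

Lemma eq_mxtens_index m n (ij ij' : 'I_m * 'I_n) :
  (mxtens_index ij == mxtens_index ij') = (ij == ij').
Proof. exact: (can_eq (@mxtens_indexK m n)). Qed.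

Lemma tens1mx1 m n : (1%:M : 'M[K]_m) *t (1%:M : 'M[K]_n) = 1%:M.
Proof.
apply/matrixP => x y; case: (mxtens_indexP x) => i j; case: (mxtens_indexP y) => i' j'.
by rewrite tensmxE !mxE eq_mxtens_index xpair_eqE -natrM mulnb.
Qed.

Lemma mul_tens1mx m n k l (B : 'M[K]_(n, k)) (B' : 'M[K]_(k, l)) :
  (1%:M : 'M[K]_m) *t (B *m B') = (1%:M *t B) *m (1%:M *t B').
Proof. by rewrite tensmx_mul mulmx1. Qed.

Variables m n : nat.

Definition lfactor (M : 'M[K]_(m * n.+1)) : 'M[K]_m :=
  \matrix_(i, i') M (mxtens_index (i, ord0)) (mxtens_index (i', ord0)).

Definition rfactor (M : 'M[K]_(m.+1 * n)) : 'M[K]_n :=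
  \matrix_(j, j') M (mxtens_index (ord0, j)) (mxtens_index (ord0, j')).

Lemma lfactorD M M' : lfactor (M + M') = lfactor M + lfactor M'.
Proof. by apply/matrixP => i i'; rewrite !mxE. Qed.

Lemma rfactorD M M' : rfactor (M + M') = rfactor M + rfactor M'.
Proof. by apply/matrixP => j j'; rewrite !mxE. Qed.

Lemma lfactorZ c M : lfactor (c *: M) = c *: lfactor M.
Proof. by apply/matrixP => i i'; rewrite !mxE. Qed.

Lemma rfactorZ c M : rfactor (c *: M) = c *: rfactor M.
Proof. by apply/matrixP => j j'; rewrite !mxE. Qed.

Lemma lfactor_tens (A : 'M[K]_m) : lfactor (A *t 1%:M) = A.
Proof. by apply/matrixP => i i'; rewrite mxE tensmxE mxE eqxx mulr1. Qed.

Lemma rfactor_tens (B : 'M[K]_n) : rfactor (1%:M *t B) = B.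
Proof. by apply/matrixP => j j'; rewrite mxE tensmxE mxE eqxx mul1r. Qed.

Lemma lfactor1 : lfactor 1%:M = 1%:M.
Proof. by rewrite -tens1mx1 lfactor_tens. Qed.

Lemma rfactor1 : rfactor 1%:M = 1%:M.
Proof. by rewrite -tens1mx1 rfactor_tens. Qed.

End TensorProducts.

Section Adjoint.
Variable R : realType.
Local Notation C := R[i].

Definition adjmx m n (A : 'M[C]_(m, n)) : 'M[C]_(n, m) := map_mx conjc A^T.

Lemma adjmxM m n k (A : 'M[C]_(m, n)) (B : 'M[C]_(n, k)) :
  adjmx (A *m B) = adjmx B *m adjmx A.
Proof. by rewrite /adjmx trmx_mul map_mxM. Qed.

Lemma adjmxD m n (A B : 'M[C]_(m, n)) : adjmx (A + B) = adjmx A + adjmx B.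
Proof. by apply/matrixP => i j; rewrite !mxE rmorphD. Qed.

Lemma adjmxZ m n (c : C) (A : 'M[C]_(m, n)) : adjmx (c *: A) = c^*%C *: adjmx A.
Proof. by apply/matrixP => i j; rewrite !mxE rmorphM. Qed.

Lemma adjmxK m n (A : 'M[C]_(m, n)) : adjmx (adjmx A) = A.
Proof. by apply/matrixP => i j; rewrite !mxE conjcK. Qed.

Lemma adjmx1 m : adjmx (1%:M : 'M[C]_m) = 1%:M.
Proof. by rewrite /adjmx trmx1 map_mx1. Qed.

Lemma adjmx0 m n : adjmx (0 : 'M[C]_(m, n)) = 0.
Proof. by rewrite /adjmx trmx0 map_mx0. Qed.

Lemma adjmx_block m1 m2 n1 n2 (A : 'M[C]_(m1, n1)) (B : 'M[C]_(m1, n2))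
    (D : 'M[C]_(m2, n1)) (E : 'M[C]_(m2, n2)) :
  adjmx (block_mx A B D E) = block_mx (adjmx A) (adjmx D) (adjmx B) (adjmx E).
Proof. by rewrite /adjmx tr_block_mx map_block_mx. Qed.

Lemma adjmx_tens m1 n1 m2 n2 (A : 'M[C]_(m1, n1)) (B : 'M[C]_(m2, n2)) :
  adjmx (A *t B) = adjmx A *t adjmx B.
Proof. by rewrite /adjmx trmx_tens map_mxT. Qed.

Lemma adjmx_perm m (s : {perm 'I_m}) : adjmx (perm_mx s : 'M[C]_m) = perm_mx s^-1.
Proof. by rewrite /adjmx tr_perm_mx; apply/matrixP => i j; rewrite !mxE conjc_nat. Qed.

Lemma lfactor_adj m n (M : 'M[C]_(m * n.+1)) : lfactor (adjmx M) = adjmx (lfactor M).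
Proof. by apply/matrixP => i i'; rewrite !mxE. Qed.

Lemma rfactor_adj m n (M : 'M[C]_(m.+1 * n)) : rfactor (adjmx M) = adjmx (rfactor M).
Proof. by apply/matrixP => j j'; rewrite !mxE. Qed.

Definition unitarymx m n (U : 'M[C]_(m, n)) : Prop :=
  U *m adjmx U = 1%:M /\ adjmx U *m U = 1%:M.

Lemma unitarymxM m n k (U : 'M[C]_(m, n)) (V : 'M[C]_(n, k)) :
  unitarymx U -> unitarymx V -> unitarymx (U *m V).
Proof.
move=> [UU' U'U] [VV' V'V]; rewrite /unitarymx adjmxM; split.
  by rewrite mulmxA -(mulmxA U) VV' mulmx1.
by rewrite mulmxA -(mulmxA (adjmx V)) U'U mulmx1.
Qed.

End Adjoint.

(** * Continuity on the unit interval *)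

Section UnitIntervalContinuity.
Variable R : realType.
Local Notation UI := (unit_interval R).

Lemma clamp_subproof (x : R) :
  (0 <= Num.min 1 (Num.max 0 x)) && (Num.min 1 (Num.max 0 x) <= 1).
Proof. by rewrite le_min ler01 le_max lexx ge_min lexx. Qed.

Definition clamp (x : R) : UI :=
  exist (fun t => (0 <= t) && (t <= 1)) _ (clamp_subproof x).

Lemma clamp_val (t : UI) : clamp (sval t) = t.
Proof.
by apply: val_inj; case: t => x /= /andP[x0 x1]; rewrite (max_idPr x0) (min_idPr x1).
Qed.

Lemma dist_clamp (x y : R) : `|sval (clamp x) - sval (clamp y)| <= `|x - y|.
Proof.
wlog xy : x y / x <= y => [hwlog|].
  by case: (leP x y) => [/hwlog//|/ltW/hwlog]; rewrite distrC [`|x - y|]distrC.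
rewrite [`|x - y|]distrC [`|y - x|]ger0_norm ?subr_ge0 //= ler_norml !maxEle !minEle.
case: (leP 0 x) => ? /=; case: (leP 0 y) => ? /=;
  by case: (leP 1 x) => ?; case: (leP 1 y) => ?; rewrite ?ler10 /=; apply/andP; split; lra.
Qed.

(* Continuity on [0,1] is continuity on R after the retraction [clamp]; [cont_uiP]
   relates it to the epsilon-delta form used in [cont_mx]. *)
Definition cont_ui (g : UI -> R) : Prop := continuous (g \o clamp).

Lemma near_clamp (P : UI -> Prop) (t : UI) :
  (\forall x \near sval t, P (clamp x)) ->
  exists2 d : R, 0 < d & forall s : UI, `|sval s - sval t| < d -> P s.
Proof.
move=> /nbhs_ballP[d /= d0 Hd]; exists d => // s st.
by rewrite -(clamp_val s); apply: Hd; rewrite -ball_normE /= distrC.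
Qed.

Lemma cont_ui_near (g : UI -> R) (t : UI) (eps : R) : cont_ui g -> 0 < eps ->
  \forall x \near sval t, `|g (clamp x) - g t| < eps.
Proof.
move=> cg eps0; have /cvgrPdist_lt/(_ eps eps0) := cg (sval t).
by rewrite /= clamp_val; apply: filterS => x; rewrite distrC.
Qed.

Lemma cont_uiP (g : UI -> R) : cont_ui g <->
  forall (t : UI) (eps : R), 0 < eps ->
  exists2 d : R, 0 < d & forall s : UI, `|sval s - sval t| < d -> `|g s - g t| < eps.
Proof.
split=> [cg t eps eps0|cg x]; first exact/near_clamp/cont_ui_near.
apply/cvgrPdist_lt => eps /(cg (clamp x))[d d0 Hd]; apply/nbhs_ballP.
exists d => //= y; rewrite /ball_ /= distrC => xy.
by rewrite distrC; apply: Hd; apply: le_lt_trans (dist_clamp _ _) xy.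
Qed.

Lemma cont_ui_const (c : R) : cont_ui (fun=> c).
Proof. by move=> x; apply: cvg_cst. Qed.

Lemma cont_uiD (g h : UI -> R) : cont_ui g -> cont_ui h -> cont_ui (fun t => g t + h t).
Proof. by move=> cg ch x; apply: (continuousD (cg x) (ch x)). Qed.

Lemma cont_uiN (g : UI -> R) : cont_ui g -> cont_ui (fun t => - g t).
Proof. by move=> cg x; apply: (continuousN (cg x)). Qed.

Lemma cont_uiM (g h : UI -> R) : cont_ui g -> cont_ui h -> cont_ui (fun t => g t * h t).
Proof. by move=> cg ch x; apply: (continuousM (cg x) (ch x)). Qed.

Lemma cont_ui_val : cont_ui (fun t => sval t).
Proof. by apply/cont_uiP => t eps eps0; exists eps. Qed.

Lemma cont_ui_comp (h : R -> R) (g : UI -> R) :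
  continuous h -> cont_ui g -> cont_ui (fun t => h (g t)).
Proof. by move=> ch cg x; apply: continuous_comp (cg x) (ch _). Qed.

Lemma cont_ui_ext (g h : UI -> R) : g =1 h -> cont_ui g -> cont_ui h.
Proof. by move=> /funext->. Qed.

Local Notation C := R[i].

Definition cont_C (h : UI -> C) : Prop :=
  cont_ui (fun t => complex.Re (h t)) /\ cont_ui (fun t => complex.Im (h t)).

Lemma cont_C_const (c : C) : cont_C (fun=> c).
Proof. by split; apply: cont_ui_const. Qed.

Lemma cont_CD (g h : UI -> C) : cont_C g -> cont_C h -> cont_C (fun t => g t + h t).
Proof.
move=> [g1 g2] [h1 h2]; split.
  by apply: cont_ui_ext (cont_uiD g1 h1) => t; case: (g t); case: (h t).
by apply: cont_ui_ext (cont_uiD g2 h2) => t; case: (g t); case: (h t).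
Qed.

Lemma cont_CN (g : UI -> C) : cont_C g -> cont_C (fun t => - g t).
Proof.
move=> [g1 g2]; split.
  by apply: cont_ui_ext (cont_uiN g1) => t; case: (g t).
by apply: cont_ui_ext (cont_uiN g2) => t; case: (g t).
Qed.

Lemma cont_CM (g h : UI -> C) : cont_C g -> cont_C h -> cont_C (fun t => g t * h t).
Proof.
move=> [g1 g2] [h1 h2]; split.
  apply: cont_ui_ext (cont_uiD (cont_uiM g1 h1) (cont_uiN (cont_uiM g2 h2))) => t.
  by case: (g t); case: (h t).
apply: cont_ui_ext (cont_uiD (cont_uiM g1 h2) (cont_uiM g2 h1)) => t.
by case: (g t) => ? ?; case: (h t) => ? ? /=; rewrite addrC.
Qed.

Lemma cont_C_conj (g : UI -> C) : cont_C g -> cont_C (fun t => (g t)^*%C).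
Proof.
move=> [g1 g2]; split; first by apply: cont_ui_ext g1 => t; case: (g t).
by apply: cont_ui_ext (cont_uiN g2) => t; case: (g t).
Qed.

Lemma cont_C_sum (I : finType) (F : I -> UI -> C) :
  (forall k, cont_C (F k)) -> cont_C (fun t => \sum_k F k t).
Proof.
move=> cF; elim: (index_enum I) => [|k r IH].
  by under [fun t => _]funext => t do rewrite big_nil; apply: cont_C_const.
by under [fun t => _]funext => t do rewrite big_cons; apply: cont_CD.
Qed.

Definition cont_M m n (F : UI -> 'M[C]_(m, n)) : Prop :=
  forall i j, cont_C (fun t => F t i j).

Lemma cont_mxP N (F : UI -> 'M[C]_N) : cont_mx F <-> cont_M F.
Proof.
split=> [cF i j|cF t eps eps0].
  by split; apply/cont_uiP => t eps /(cF t)[d d0 Hd];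
    exists d => // s /Hd/(_ i j)[].
pose close s i j := `|complex.Re (F s i j) - complex.Re (F t i j)| < eps /\
                    `|complex.Im (F s i j) - complex.Im (F t i j)| < eps.
have near_ij i j : \forall x \near sval t, close (clamp x) i j.
  have [/cont_ui_near Re_near /cont_ui_near Im_near] := cF i j.
  by near=> x; split; near: x; [apply: Re_near | apply: Im_near].
have := filter_forall (nbhs_filter _) (fun i => filter_forall (nbhs_filter _) (near_ij i)).
exact: (near_clamp (P := fun s => forall i j, close s i j)).
Unshelve. all: by end_near.
Qed.

Lemma cont_M_const m n (A : 'M[C]_(m, n)) : cont_M (fun=> A).
Proof. by move=> i j; apply: cont_C_const. Qed.

Lemma cont_MD m n (F G : UI -> 'M[C]_(m, n)) :
  cont_M F -> cont_M G -> cont_M (fun t => F t + G t).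
Proof.
move=> cF cG i j.
by under [fun t => _]funext => t do rewrite mxE; apply: cont_CD.
Qed.

Lemma cont_MZ m n (g : UI -> C) (F : UI -> 'M[C]_(m, n)) :
  cont_C g -> cont_M F -> cont_M (fun t => g t *: F t).
Proof.
move=> cg cF i j.
by under [fun t => _]funext => t do rewrite mxE; apply: cont_CM.
Qed.

Lemma cont_MM m n k (F : UI -> 'M[C]_(m, n)) (G : UI -> 'M[C]_(n, k)) :
  cont_M F -> cont_M G -> cont_M (fun t => F t *m G t).
Proof.
move=> cF cG i j; under [fun t => _]funext => t do rewrite mxE.
by apply: cont_C_sum => l; apply: cont_CM.
Qed.

Lemma cont_M_adj m n (F : UI -> 'M[C]_(m, n)) :
  cont_M F -> cont_M (fun t => adjmx (F t)).
Proof.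
move=> cF i j.
by under [fun t => _]funext => t do rewrite !mxE; apply: cont_C_conj.
Qed.

Lemma cont_M_block m1 m2 n1 n2
    (A : UI -> 'M[C]_(m1, n1)) (B : UI -> 'M[C]_(m1, n2))
    (D : UI -> 'M[C]_(m2, n1)) (E : UI -> 'M[C]_(m2, n2)) :
  cont_M A -> cont_M B -> cont_M D -> cont_M E ->
  cont_M (fun t => block_mx (A t) (B t) (D t) (E t)).
Proof.
move=> cA cB cD cE i j.
case: (split_ordP i) => i' ->; case: (split_ordP j) => j' ->.
- by under [fun t => _]funext => t do rewrite block_mxEul.
- by under [fun t => _]funext => t do rewrite block_mxEur.
- by under [fun t => _]funext => t do rewrite block_mxEdl.
- by under [fun t => _]funext => t do rewrite block_mxEdr.
Qed.

Lemma cont_M_tens m1 n1 m2 n2 (A : 'M[C]_(m1, n1)) (F : UI -> 'M[C]_(m2, n2)) :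
  cont_M F -> cont_M (fun t => A *t F t).
Proof.
move=> cF i j; case: (mxtens_indexP i) => i1 i2; case: (mxtens_indexP j) => j1 j2.
under [fun t => _]funext => t do rewrite tensmxE.
by apply: cont_CM; [apply: cont_C_const | apply: cF].
Qed.

End UnitIntervalContinuity.

(** * Unitary paths between permutation matrices *)

Section UnitaryPaths.
Variable R : realType.
Local Notation UI := (unit_interval R).
Local Notation C := R[i].

(* [(1 + e^{i pi t}) / 2] runs along the circle [|c - 1/2| = 1/2] from 1 to 0, which
   makes [c + (1 - c) P] unitary for every self-adjoint involution [P]. *)
Definition halfturn (t : UI) : C :=
  ((1 + cos (pi * sval t)) / 2 +i* (sin (pi * sval t) / 2))%C.

Lemma cont_C_halfturn : cont_C halfturn.
Proof.
have cpi := cont_uiM (@cont_ui_const R pi) (@cont_ui_val R).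
rewrite /cont_C /halfturn /=; split; apply: cont_uiM; try exact: cont_ui_const.
  by apply: cont_uiD; [exact: cont_ui_const | exact: cont_ui_comp (@continuous_cos R) cpi].
exact: cont_ui_comp (@continuous_sin R) cpi.
Qed.

Lemma halfturn0 : halfturn (ui0 R) = 1.
Proof.
rewrite /halfturn /= mulr0 cos0 sin0 mul0r.
by have -> : (1 + 1) / 2 = 1 :> R by lra.
Qed.

Lemma halfturn1 : halfturn (ui1 R) = 0.
Proof. by rewrite /halfturn /= mulr1 cospi sinpi subrr !mul0r. Qed.

Lemma halfturn_circle t : let c := halfturn t in c + c^*%C = c * c^*%C + c * c^*%C.
Proof.
have := cos2Dsin2 (pi * sval t); rewrite /halfturn /=.
set c := cos _; set s := sin _ => cs; apply/eqP; rewrite eq_complex /=; apply/andP; split.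
  by apply/eqP; nra.
by apply/eqP; field.
Qed.

Lemma mulmx_swap_inv m (P : 'M[C]_m) (c d : C) :
  P *m P = 1%:M -> c + d = c * d + c * d ->
  (c *: 1%:M + (1 - c) *: P) *m (d *: 1%:M + (1 - d) *: P) = 1%:M.
Proof.
move=> PP cd.
rewrite mulmxDl !mulmxDr -!scalemxAl -!scalemxAr !mul1mx !mulmx1 PP !scalerA.
rewrite [X in X + _ = _]addrC addrACA -!scalerDl.
have -> : c * d + (1 - c) * (1 - d) = 1 + (c * d + c * d - (c + d)) by ring.
have -> : c * (1 - d) + (1 - c) * d = c + d - (c * d + c * d) by ring.
by rewrite -cd subrr addr0 scale1r scale0r add0r.
Qed.

Definition swap_path m (P : 'M[C]_m) (t : UI) : 'M[C]_m :=
  halfturn t *: 1%:M + (1 - halfturn t) *: P.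

Lemma unitary_swap_path m (P : 'M[C]_m) t :
  P *m P = 1%:M -> adjmx P = P -> unitarymx (swap_path P t).
Proof.
move=> PP adjP; have circ := halfturn_circle t.
have conjB : (1 - halfturn t)^*%C = 1 - (halfturn t)^*%C by rewrite rmorphB rmorph1.
rewrite /unitarymx /swap_path adjmxD !adjmxZ adjmx1 adjP conjB.
by split; apply: mulmx_swap_inv => //; rewrite addrC mulrC.
Qed.

Lemma cont_M_swap_path m (P : 'M[C]_m) : cont_M (swap_path P).
Proof.
apply: cont_MD; apply: cont_MZ; try exact: cont_M_const; first exact: cont_C_halfturn.
by apply: cont_CD; [exact: cont_C_const | apply/cont_CN/cont_C_halfturn].
Qed.

Lemma unitary_path_perm m (s : {perm 'I_m}) : exists U : UI -> 'M[C]_m,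
  [/\ cont_M U, forall t, unitarymx (U t), U (ui0 R) = 1%:M & U (ui1 R) = perm_mx s].
Proof.
have [ts -> _] := prod_tpermP s; elim: ts => [|[x y] ts [U [cU uU U0 U1]]].
  exists (fun=> 1%:M); split; rewrite ?big_nil ?perm_mx1 //; first exact: cont_M_const.
  by move=> t; rewrite /unitarymx adjmx1 mulmx1.
pose P : 'M[C]_m := perm_mx (tperm x y).
have PP : P *m P = 1%:M by rewrite -perm_mxM tperm2 perm_mx1.
have adjP : adjmx P = P by rewrite adjmx_perm tpermV.
exists (fun t => swap_path P t *m U t); split.
- exact: cont_MM (cont_M_swap_path _) cU.
- by move=> t; apply: unitarymxM (uU t); apply: unitary_swap_path.
- by rewrite U0 mulmx1 /swap_path halfturn0 subrr scale0r addr0 scale1r.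
- by rewrite U1 big_cons perm_mxM /swap_path halfturn1 scale0r add0r subr0 scale1r.
Qed.

Lemma unitary_perm m (s : {perm 'I_m}) : unitarymx (perm_mx s : 'M[C]_m).
Proof. by rewrite /unitarymx adjmx_perm -!perm_mxM mulgV mulVg perm_mx1. Qed.

Lemma conj_rowsub1 m d (sg : 'I_m -> 'I_d) (M : 'M[C]_d) :
  rowsub sg 1%:M *m M *m adjmx (rowsub sg 1%:M) = mxsub sg sg M.
Proof.
by rewrite -rowsubE /adjmx trmx_mxsub map_mxsub trmx1 map_mx1 mulmx_colsub mulmx1 -mxsubcr.
Qed.

Lemma relabel_path m d (sg0 sg1 : 'I_m -> 'I_d) :
  m = d -> injective sg0 -> injective sg1 -> exists W : UI -> 'M[C]_(m, d),
  [/\ cont_M W, forall t, unitarymx (W t),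
      W (ui0 R) = rowsub sg0 1%:M & W (ui1 R) = rowsub sg1 1%:M].
Proof.
move=> md; subst d => inj0 inj1.
pose s0 := perm inj0; pose s1 := perm inj1.
have [U [cU uU U0 U1]] := unitary_path_perm (s1 * s0^-1).
exists (fun t => U t *m perm_mx s0); split.
- exact: cont_MM cU (cont_M_const _).
- by move=> t; apply: unitarymxM (uU t) (unitary_perm _).
- by rewrite U0 mul1mx; apply/matrixP => x y; rewrite !mxE permE.
- by rewrite U1 -perm_mxM mulgKV; apply/matrixP => x y; rewrite !mxE permE.
Qed.

End UnitaryPaths.

(** * Direct sums of copies *)

(* Rows and columns of a block diagonal matrix with one [p x p] block [A] for each
   element of [I] and one [q x q] block [B] for each element of [J]; that matrix is
   [copies_ker A B]. *)
Notation copies p q I J := ((I * 'I_p) + (J * 'I_q))%type.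

Section Copies.
Variable K : comPzRingType.
Variables p q : nat.

Definition map_copies (I J I' J' : finType) (g : I -> I') (h : J -> J')
    (u : copies p q I J) : copies p q I' J' :=
  match u with inl (c, r) => inl (g c, r) | inr (c, s) => inr (h c, s) end.

Lemma map_copies_inj (I J I' J' : finType) (g : I -> I') (h : J -> J') :
  injective g -> injective h -> injective (map_copies g h).
Proof.
by move=> ig ih [[c r]|[c s]] [[c' r']|[c' s']] //= [] => [/ig|/ih] -> ->.
Qed.

Definition copies_tensr n (I J : finType) (uj : copies p q I J * 'I_n) :
    copies p q (I * 'I_n)%type (J * 'I_n)%type :=
  map_copies (pair^~ uj.2) (pair^~ uj.2) uj.1.

Definition copies_tensl n (I J : finType) (iu : 'I_n * copies p q I J) :
    copies p q ('I_n * I)%type ('I_n * J)%type :=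
  map_copies (pair iu.1) (pair iu.1) iu.2.

Lemma copies_tensr_inj n (I J : finType) : injective (@copies_tensr n I J).
Proof. by move=> [[[c r]|[c s]] j] [[[c' r']|[c' s']] j'] //= [-> -> ->]. Qed.

Lemma copies_tensl_inj n (I J : finType) : injective (@copies_tensl n I J).
Proof. by move=> [i [[c r]|[c s]]] [i' [[c' r']|[c' s']]] //= [-> -> ->]. Qed.

Definition copies_ker (A : 'M[K]_p) (B : 'M[K]_q) (I J : finType)
    (u v : copies p q I J) : K :=
  match u, v with
  | inl (c, r), inl (c', r') => (c == c')%:R * A r r'
  | inr (c, s), inr (c', s') => (c == c')%:R * B s s'
  | _, _ => 0
  end.

Variables (A : 'M[K]_p) (B : 'M[K]_q).

Lemma copies_ker_map (I J I' J' : finType) (g : I -> I') (h : J -> J') u v :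
  injective g -> injective h ->
  copies_ker A B (map_copies g h u) (map_copies g h v) = copies_ker A B u v.
Proof.
by move=> ig ih; case: u => [[c r]|[c s]]; case: v => [[c' r']|[c' s']] //=;
  rewrite ?(inj_eq ig) ?(inj_eq ih).
Qed.

Lemma copies_ker_tensr (I J : finType) n (u v : copies p q I J) (j j' : 'I_n) :
  copies_ker A B (copies_tensr (u, j)) (copies_tensr (v, j')) =
  (j == j')%:R * copies_ker A B u v.
Proof.
by case: u => [[c r]|[c s]]; case: v => [[c' r']|[c' s']] /=;
  rewrite ?mulr0 // xpair_eqE -mulnb natrM mulrA [_ * (j == j')%:R]mulrC.
Qed.

Lemma copies_ker_tensl (I J : finType) n (i i' : 'I_n) (u v : copies p q I J) :
  copies_ker A B (copies_tensl (i, u)) (copies_tensl (i', v)) =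
  (i == i')%:R * copies_ker A B u v.
Proof.
by case: u => [[c r]|[c s]]; case: v => [[c' r']|[c' s']] /=;
  rewrite ?mulr0 // xpair_eqE -mulnb natrM mulrA.
Qed.

End Copies.

Definition card_bij (T T' : finType) (eT : #|T| = #|T'|) (x : T) : T' :=
  enum_val (cast_ord eT (enum_rank x)).

Lemma card_bij_inj (T T' : finType) (eT : #|T| = #|T'|) : injective (card_bij eT).
Proof. by move=> x y /enum_val_inj/cast_ord_inj/enum_rank_inj. Qed.
Arguments card_bij_inj {T T'} eT.

(** * The amplification map *)

Section PointwiseStarHom.
Variables (R : realType) (p q : nat).
Local Notation UI := (unit_interval R).
Local Notation C := R[i].
Local Notation Z := (Z_alg R p q).

Definition pointwise_star_hom d (D : Z -> UI -> 'M[C]_d) : Prop :=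
  [/\ forall f g h : Z, (forall t, sval h t = sval f t + sval g t) ->
        forall t, D h t = D f t + D g t,
      forall (c : C) (f h : Z), (forall t, sval h t = c *: sval f t) ->
        forall t, D h t = c *: D f t,
      forall f g h : Z, (forall t, sval h t = sval f t *m sval g t) ->
        forall t, D h t = D f t *m D g t,
      forall f h : Z, (forall t, sval h t = adjmx (sval f t)) ->
        forall t, D h t = adjmx (D f t) &
      forall u : Z, (forall t, sval u t = 1%:M) -> forall t, D u t = 1%:M].

Lemma pointwise_star_hom_conj d d' (D : Z -> UI -> 'M[C]_d)
    (W : UI -> 'M[C]_(d', d)) :
  pointwise_star_hom D -> (forall t, unitarymx (W t)) ->
  pointwise_star_hom (fun f t => W t *m D f t *m adjmx (W t)).
Proof.
move=> [Dadd Dscale Dmul Dadj Dunit] uW; split.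
- by move=> f g h e t; rewrite (Dadd f g h e) mulmxDr mulmxDl.
- by move=> c f h e t; rewrite (Dscale c f h e) -scalemxAr -scalemxAl.
- move=> f g h e t; have [_ W'W] := uW t; rewrite (Dmul f g h e).
  by rewrite !mulmxA -[_ *m adjmx (W t) *m W t]mulmxA W'W mulmx1.
- by move=> f h e t; rewrite (Dadj f h e) !adjmxM adjmxK mulmxA.
- by move=> u e t; have [WW' _] := uW t; rewrite (Dunit u e) mulmx1 WW'.
Qed.

Lemma star_hom_of_pointwise p' q' (D : Z -> UI -> 'M[C]_(p' * q')) :
  pointwise_star_hom D -> (forall f, in_Z (D f)) ->
  exists phi : Z -> Z_alg R p' q', unital_star_hom phi.
Proof. by move=> hD inZ; exists (fun f => exist _ _ (inZ f)). Qed.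

End PointwiseStarHom.

Section Amplification.
Variables (R : realType) (p' a b N : nat).
Local Notation p := p'.+1.
Hypothesis N_decomp : N = a.+1 * p + b * p.+1.
Local Notation UI := (unit_interval R).
Local Notation C := R[i].
Local Notation Z := (Z_alg R p p.+1).

Definition dim_amp := ((a.+1 + b) * (p * p.+1) + (a * N * p + b * N.+1 * p.+1))%N.

Definition amplify (f : Z) (t : UI) : 'M[C]_dim_amp :=
  block_mx (1%:M *t sval f t) 0 0
    (block_mx (1%:M *t lfactor (sval f (ui0 R))) 0 0 (1%:M *t rfactor (sval f (ui1 R)))).

Lemma amplify_star_hom : pointwise_star_hom amplify.
Proof.
split=> [f g h e t|c f h e t|f g h e t|f h e t|u e t]; rewrite /amplify !e.
- by rewrite lfactorD rfactorD !tensmxDr !add_block_mx !addr0.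
- by rewrite lfactorZ rfactorZ !tensmxZr !scale_block_mx !scaler0.
- have [_ [[Af eAf] [Bf eBf]]] := svalP f; have [_ [[Ag eAg] [Bg eBg]]] := svalP g.
  rewrite eAf eAg eBf eBg !tensmx_mul !mulmx1 !lfactor_tens !rfactor_tens.
  by rewrite !mulmx_block !mulmx0 !mul0mx !addr0 !add0r -!mul_tens1mx.
- by rewrite lfactor_adj rfactor_adj !adjmx_block !adjmx0 !adjmx_tens !adjmx1.
- by rewrite (@lfactor1 _ p p) (@rfactor1 _ p' p.+1) !tens1mx1 -!scalar_mx_block.
Qed.

Lemma cont_M_amplify (f : Z) : cont_M (amplify f).
Proof.
have [/cont_mxP cf _] := svalP f.
by apply: cont_M_block; try exact: cont_M_const; apply: cont_M_tens.
Qed.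

Local Notation copies0 :=
  (copies p p.+1 (('I_(a.+1 + b) * 'I_p.+1) + 'I_(a * N))%type 'I_(b * N.+1)).
Local Notation copies1 :=
  (copies p p.+1 'I_(a * N) (('I_(a.+1 + b) * 'I_p) + 'I_(b * N.+1))%type).

(* Positions of the blocks of [amplify f t] as copies of [A_f] and [B_f]: at [t = 0]
   the first block [1 *t (A_f *t 1)] is made of copies of [A_f] indexed by
   ['I_(a+1+b) * 'I_(p+1)], at [t = 1] the first block [1 *t (1 *t B_f)] is made of
   copies of [B_f] indexed by ['I_(a+1+b) * 'I_p]. *)
Definition copy_index0 (u : copies0) : 'I_dim_amp :=
  match u with
  | inl (inl (k, s), r) => lshift _ (mxtens_index (k, mxtens_index (r, s)))
  | inl (inr k, r) => rshift _ (lshift _ (mxtens_index (k, r)))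
  | inr (k, s) => rshift _ (rshift _ (mxtens_index (k, s)))
  end.

Definition copy_index1 (u : copies1) : 'I_dim_amp :=
  match u with
  | inl (k, r) => rshift _ (lshift _ (mxtens_index (k, r)))
  | inr (inl (k, r), s) => lshift _ (mxtens_index (k, mxtens_index (r, s)))
  | inr (inr k, s) => rshift _ (rshift _ (mxtens_index (k, s)))
  end.

Lemma copy_index0_inj : injective copy_index0.
Proof.
move=> u v /eqP; case: u => [[[[k s]|k] r]|[k s]]; case: v => [[[[k' s']|k'] r']|[k' s']];
  rewrite /= ?eq_lshift ?eq_rshift ?eq_lrshift ?eq_rlshift //.
- by rewrite !(eq_mxtens_index, xpair_eqE) => /and3P[/eqP-> /eqP-> /eqP->].
- by rewrite eq_lshift eq_mxtens_index xpair_eqE => /andP[/eqP-> /eqP->].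
- by rewrite eq_mxtens_index xpair_eqE => /andP[/eqP-> /eqP->].
Qed.

Lemma copy_index1_inj : injective copy_index1.
Proof.
move=> u v /eqP; case: u => [[k r]|[[[k s]|k] r]]; case: v => [[k' r']|[[[k' s']|k'] r']];
  rewrite /= ?eq_lshift ?eq_rshift ?eq_lrshift ?eq_rlshift //.
- by rewrite eq_lshift eq_mxtens_index xpair_eqE => /andP[/eqP-> /eqP->].
- by rewrite !(eq_mxtens_index, xpair_eqE) => /and3P[/eqP-> /eqP-> /eqP->].
- by rewrite eq_mxtens_index xpair_eqE => /andP[/eqP-> /eqP->].
Qed.

Lemma amplify0E f (A : 'M[C]_p) : sval f (ui0 R) = A *t 1%:M -> forall u v,
  amplify f (ui0 R) (copy_index0 u) (copy_index0 v) =
  copies_ker A (rfactor (sval f (ui1 R))) u v.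
Proof.
move=> eA u v; rewrite /amplify eA lfactor_tens.
case: u => [[[[k s]|k] r]|[k s]]; case: v => [[[[k' s']|k'] r']|[k' s']];
  cbn [copy_index0 copies_ker];
  rewrite ?(block_mxEul, block_mxEur, block_mxEdl, block_mxEdr) ?tensmxE ?mxE ?mul0r //=.
by rewrite -[inl _ == _]/((k, s) == (k', s')) xpair_eqE -mulnb natrM; ring.
Qed.

Lemma amplify1E f (B : 'M[C]_p.+1) : sval f (ui1 R) = 1%:M *t B -> forall u v,
  amplify f (ui1 R) (copy_index1 u) (copy_index1 v) =
  copies_ker (lfactor (sval f (ui0 R))) B u v.
Proof.
move=> eB u v; rewrite /amplify eB rfactor_tens.
case: u => [[k r]|[[[k r]|k] s]]; case: v => [[k' r']|[[[k' r']|k'] s']];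
  cbn [copy_index1 copies_ker];
  rewrite ?(block_mxEul, block_mxEur, block_mxEdl, block_mxEdr) ?tensmxE ?mxE ?mul0r //=.
by rewrite -[inl _ == _]/((k, r) == (k', r')) xpair_eqE -mulnb natrM; ring.
Qed.

Lemma card_decomp0 : #|'I_N| = #|{: copies p p.+1 'I_a.+1 'I_b}|.
Proof. by rewrite card_sum !card_prod !card_ord. Qed.

Lemma card_decomp1 : #|'I_N.+1| = #|{: copies p p.+1 'I_a 'I_b.+1}|.
Proof. by rewrite card_sum !card_prod !card_ord N_decomp; lia. Qed.

Lemma card_copiesA0 :
  #|{: 'I_a.+1 * 'I_N.+1}| = #|{: ('I_(a.+1 + b) * 'I_p.+1) + 'I_(a * N)}|.
Proof. by rewrite card_sum !card_prod !card_ord N_decomp; nia. Qed.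

Lemma card_copiesB0 : #|{: 'I_b * 'I_N.+1}| = #|'I_(b * N.+1)|.
Proof. by rewrite card_prod !card_ord. Qed.

Lemma card_copiesA1 : #|{: 'I_N * 'I_a}| = #|'I_(a * N)|.
Proof. by rewrite card_prod !card_ord mulnC. Qed.

Lemma card_copiesB1 :
  #|{: 'I_N * 'I_b.+1}| = #|{: ('I_(a.+1 + b) * 'I_p) + 'I_(b * N.+1)}|.
Proof. by rewrite card_sum !card_prod !card_ord N_decomp; nia. Qed.

Lemma dim_amp_eq : (N * N.+1 = dim_amp)%N.
Proof. by rewrite /dim_amp N_decomp; nia. Qed.

(* Copies of the same block are interchangeable, so any bijection between copy
   index sets of equal size will do. *)
Definition relabel0 (x : 'I_(N * N.+1)) : 'I_dim_amp :=
  copy_index0 (map_copies (card_bij card_copiesA0) (card_bij card_copiesB0)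
    (copies_tensr (card_bij card_decomp0 (mxtens_unindex x).1, (mxtens_unindex x).2))).

Definition relabel1 (x : 'I_(N * N.+1)) : 'I_dim_amp :=
  copy_index1 (map_copies (card_bij card_copiesA1) (card_bij card_copiesB1)
    (copies_tensl ((mxtens_unindex x).1, card_bij card_decomp1 (mxtens_unindex x).2))).

Lemma relabel0_inj : injective relabel0.
Proof.
move=> x y; case: (mxtens_indexP x) => i j; case: (mxtens_indexP y) => i' j'.
rewrite /relabel0 !mxtens_indexK => /copy_index0_inj.
move=> /(map_copies_inj (card_bij_inj _) (card_bij_inj _)).
by move=> /copies_tensr_inj[/card_bij_inj-> ->].
Qed.

Lemma relabel1_inj : injective relabel1.
Proof.
move=> x y; case: (mxtens_indexP x) => i j; case: (mxtens_indexP y) => i' j'.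
rewrite /relabel1 !mxtens_indexK => /copy_index1_inj.
move=> /(map_copies_inj (card_bij_inj _) (card_bij_inj _)).
by move=> /copies_tensl_inj[-> /card_bij_inj->].
Qed.

Lemma amplify_relabel0 (f : Z) :
  exists X, mxsub relabel0 relabel0 (amplify f (ui0 R)) = X *t 1%:M.
Proof.
have [_ [[A eA] _]] := svalP f; pose split0 := card_bij card_decomp0.
exists (\matrix_(i, i') copies_ker A (rfactor (sval f (ui1 R))) (split0 i) (split0 i')).
apply/matrixP => x y; case: (mxtens_indexP x) => i j; case: (mxtens_indexP y) => i' j'.
rewrite mxE /relabel0 !mxtens_indexK (amplify0E eA).
rewrite copies_ker_map; try exact: card_bij_inj.
by rewrite copies_ker_tensr tensmxE !mxE mulrC.
Qed.

Lemma amplify_relabel1 (f : Z) :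
  exists Y, mxsub relabel1 relabel1 (amplify f (ui1 R)) = 1%:M *t Y.
Proof.
have [_ [_ [B eB]]] := svalP f; pose split1 := card_bij card_decomp1.
exists (\matrix_(j, j') copies_ker (lfactor (sval f (ui0 R))) B (split1 j) (split1 j')).
apply/matrixP => x y; case: (mxtens_indexP x) => i j; case: (mxtens_indexP y) => i' j'.
rewrite mxE /relabel1 !mxtens_indexK (amplify1E eB).
rewrite copies_ker_map; try exact: card_bij_inj.
by rewrite copies_ker_tensl tensmxE !mxE.
Qed.

Lemma exists_star_hom_Z : exists phi : Z -> Z_alg R N N.+1, unital_star_hom phi.
Proof.
have [W [cW uW W0 W1]] := relabel_path R dim_amp_eq relabel0_inj relabel1_inj.
apply: star_hom_of_pointwise (pointwise_star_hom_conj amplify_star_hom uW) _ => f.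
split; [|split].
- by apply/cont_mxP; apply: cont_MM (cont_M_adj cW); apply: cont_MM cW (cont_M_amplify f).
- by rewrite W0 conj_rowsub1; apply: amplify_relabel0.
- by rewrite W1 conj_rowsub1; apply: amplify_relabel1.
Qed.

End Amplification.

Lemma exists_coin_decomp p N : (p.+1 * p.+1 <= N)%N ->
  exists a b, N = (a.+1 * p.+1 + b * p.+2)%N.
Proof.
move=> pN; have r_lt : (N %% p.+1 < p.+1)%N by rewrite ltn_mod.
have q_ge : (p.+1 <= N %/ p.+1)%N by rewrite leq_divRL.
exists (N %/ p.+1 - N %% p.+1).-1%N, (N %% p.+1)%N.
rewrite prednK ?subn_gt0; last exact: leq_trans r_lt q_ge.
have rq : (N %% p.+1 * p.+1 <= N %/ p.+1 * p.+1)%N.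
  by rewrite leq_mul2r (ltnW (leq_trans r_lt q_ge)) orbT.
by rewrite {1}(divn_eq N p.+1) mulnBl mulnS; lia.
Qed.

Lemma sqr_le_exp2 n : (n * n <= 2 ^ (n + n))%N.
Proof. by rewrite expnD leq_mul // ltnW // ltn_expl. Qed.

Theorem lemma5p10 (R : realType) (n : nat) (hn : (0 < n)%N) :
  exists (k : nat) (phi : Z_alg R n n.+1 -> Z_alg R (2 ^ k) (2 ^ k).+1),
    (0 < k)%N /\ unital_star_hom phi.
Proof.
case: n hn => [//|n] _.
have [a [b decomp]] := exists_coin_decomp (sqr_le_exp2 n.+1).
have [phi hphi] := exists_star_hom_Z R decomp.
by exists (n.+1 + n.+1)%N, phi.
Qed.
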